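(* Let $\mathbb{X}$ be a basic reverse differential restriction category with countable disjoint joins. Let the following be given: - maps $b_T,b_F:\Gamma\times U\to 1$ such that $\overline{b_T}\,\overline{b_F}$ is nowhere defined; - maps $m,n:\Gamma\times U\to T$; - maps $a:\Gamma\to U$ and $v:\Gamma\to T$. Then $$\langle\langle 1_\Gamma,a\rangle,v\rangle\,R\big[\overline{b_T}\,m\vee\overline{b_F}\,n\big]\,\pi_1 =\overline{\langle 1_\Gamma,a\rangle b_T}\,\langle\langle 1_\Gamma,a\rangle,v\rangle R[m]\pi_1\ \vee\ \overline{\langle 1_\Gamma,a\rangle b_F}\,\langle\langle 1_\Gamma,a\rangle,v\rangle R[n]\pi_1 .$$ In the language SDPL, this is the statement that $$[\![v.\mathrm{rd}(x{:}U.\ \texttt{if } b \texttt{ then } m\texttt{ else } n)(a)]\!]=[\![\texttt{if }(\texttt{let } x=a\texttt{ in } b)\texttt{ then } v.\mathrm{rd}(x{:}U.m)(a)\texttt{ else } v.\mathrm{rd}(x{:}U.n)(a)]\!].$$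
   Context: Composition is written in diagrammatic order: $fg$ means ''first $f$, then $g$''. A restriction category is a category with an operation sending each $f:A\to B$ to a map $\bar f:A\to A$ such that $\bar f f=f$, $\bar f\bar g=\bar g\bar f$ (for $f,g$ with common domain), $\overline{\bar f g}=\bar f\bar g$, and $f\bar g=\overline{fg}\,f$. A map $f$ is total if $\bar f=1$. For parallel maps: - $f\le g$ means $\bar f g=f$; - a nowhere-defined map $\emptyset$ is a least element for $\le$; - $f,g$ are disjoint if $\bar f g$ is nowhere defined; - the join $\bigvee_i f_i$ of a family is its least upper bound for $\le$. ''Countable disjoint joins'' means that every countable family of pairwise disjoint parallel maps has a join, and composition preserves such joins on both sides: $h(\bigvee_i f_i)k=\bigvee_i hf_ik$. The category has restriction products if: - there is an object $1$ with a total map $!_A:A\to 1$ for each $A$ such that every $f:A\to1$ equals $\bar f\,!_A$; - for all $A,B$ there is an object $A\times B$ with total maps $\pi_0,\pi_1$ such that for all $f:C\to A$, $g:C\to B$ there is a unique $\langle f,g\rangle$ with $\langle f,g\rangle\pi_0=\bar g f$ and $\langle f,g\rangle\pi_1=\bar f g$. Write $f\times g=\langle\pi_0f,\pi_1g\rangle$. A Cartesian left additive restriction category is a restriction category with restriction products in which every hom-set is a commutative monoid $(+,0)$ such that: - $\overline{f+g}=\bar f\bar g$ and $\bar 0=1$; - $x(f+g)=xf+xg$ and $x0=\bar x 0$; - $(f+g)\pi_i=f\pi_i+g\pi_i$ and $0\pi_i=0$. Write $\iota_0=\langle 1,0\rangle$ and $\iota_1=\langle 0,1\rangle$. A basic reverse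 differential restriction category is a Cartesian left additive restriction category with an operation sending each $f:A\to B$ to $R[f]:A\times B\to A$ satisfying: - [RD.1] $R[f+g]=R[f]+R[g]$ and $R[0]=0$. - [RD.2] $\langle a,b+c\rangle R[f]=\langle a,b\rangle R[f]+\langle a,c\rangle R[f]$ and $\langle a,0\rangle R[f]=\overline{af}\,0$. - [RD.3] $R[\pi_j]=\pi_1\iota_j$. - [RD.4] $R[\langle f,g\rangle]=(1\times\pi_0)R[f]+(1\times\pi_1)R[g]$. - [RD.5] $R[fg]=\langle\pi_0,\langle\pi_0f,\pi_1\rangle R[g]\rangle R[f]$. - [RD.8] $\overline{R[f]}=\bar f\times 1$. - [RD.9] $R[\bar f]=(\bar f\times1)\pi_1$. Semantics of SDPL used in the second formulation: - A predicate $b$ in context $\Gamma,x{:}U$ is interpreted by a pair $(b_T,b_F)$ of maps $\Gamma\times U\to 1$ with disjoint restrictions. - $[\![\texttt{if } b\texttt{ then }m\texttt{ else }n]\!]=\overline{b_T}[\![m]\!]\vee\overline{b_F}[\![n]\!]$. - $[\![\texttt{let } x=a\texttt{ in } b]\!]_H=\langle 1,[\![a]\!]\rangle b_H$ for $H\in\{T,F\}$. - $[\![v.\mathrm{rd}(x.m)(a)]\!]=\langle\langle 1,[\![a]\!]\rangle,[\![v]\!]\rangle R[[\![m]\!]]\pi_1$. *)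

(* Composition is written in diagrammatic order: f >> g = "first f, then g". *)

Record RDRCData := {
  Obj : Type;
  Hom : Obj -> Obj -> Type;
  comp : forall A B C : Obj, Hom A B -> Hom B C -> Hom A C;
  idm : forall A : Obj, Hom A A;
  rst : forall A B : Obj, Hom A B -> Hom A A;
  one : Obj;
  bang : forall A : Obj, Hom A one;
  prod : Obj -> Obj -> Obj;
  pi0 : forall A B : Obj, Hom (prod A B) A;
  pi1 : forall A B : Obj, Hom (prod A B) B;
  pair : forall A B C : Obj, Hom C A -> Hom C B -> Hom C (prod A B);
  add : forall A B : Obj, Hom A B -> Hom A B -> Hom A B;
  zero : forall A B : Obj, Hom A B;
  RD : forall A B : Obj, Hom A B -> Hom (prod A B) A
}.

Arguments comp {_ _ _ _} _ _.
Arguments idm {_} _.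
Arguments rst {_ _ _} _.
Arguments one {_}.
Arguments bang {_} _.
Arguments prod {_} _ _.
Arguments pi0 {_ _ _}.
Arguments pi1 {_ _ _}.
Arguments pair {_ _ _ _} _ _.
Arguments add {_ _ _} _ _.
Arguments zero {_ _ _}.
Arguments RD {_ _ _} _.

Declare Scope rc_scope.
Delimit Scope rc_scope with rc.
Open Scope rc_scope.
Notation "f >> g" := (comp f g) (at level 40, left associativity) : rc_scope.
Notation "⟨ f , g ⟩" := (pair f g) (at level 0) : rc_scope.

Section Defs.
Variable X : RDRCData.

Definition total {A B : Obj X} (f : Hom X A B) : Prop := rst f = idm A.

Definition tens {A B C D : Obj X} (f : Hom X A C) (g : Hom X B D)
  : Hom X (prod A B) (prod C D) := ⟨ pi0 >> f , pi1 >> g ⟩.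

Definition iota0 {A B : Obj X} : Hom X A (prod A B) := ⟨ idm A , zero ⟩.
Definition iota1 {A B : Obj X} : Hom X B (prod A B) := ⟨ zero , idm B ⟩.

Definition le {A B : Obj X} (f g : Hom X A B) : Prop := rst f >> g = f.

Definition nowhere {A B : Obj X} (f : Hom X A B) : Prop :=
  forall g : Hom X A B, le f g.

Definition disjoint {A B : Obj X} (f g : Hom X A B) : Prop :=
  nowhere (rst f >> g).

Definition is_join {I : Type} {A B : Obj X} (f : I -> Hom X A B) (j : Hom X A B)
  : Prop :=
  (forall i, le (f i) j) /\
  (forall h : Hom X A B, (forall i, le (f i) h) -> le j h).

Definition is_join2 {A B : Obj X} (f g j : Hom X A B) : Prop :=
  le f j /\ le g j /\ (forall h, le f h -> le g h -> le j h).

Definition pairwise_disjoint {I : Type} {A B : Obj X} (f : I -> Hom X A B) : Prop :=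
  forall i i', i <> i' -> disjoint (f i) (f i').

(* countable disjoint joins: every countable (possibly finite or empty)
   pairwise-disjoint family has a join, preserved by composition on both sides *)
Definition has_countable_disjoint_joins : Prop :=
  forall (I : Type) (e : I -> nat), (forall i i', e i = e i' -> i = i') ->
  forall (A B : Obj X) (f : I -> Hom X A B), pairwise_disjoint f ->
    (exists j, is_join f j) /\
    (forall (C D : Obj X) (h : Hom X C A) (k : Hom X B D) (j : Hom X A B),
        is_join f j -> is_join (fun i => h >> f i >> k) (h >> j >> k)).

Record IsBasicRDRC : Prop := {
  comp_assoc : forall (A B C D : Obj X) (f : Hom X A B) (g : Hom X B C) (h : Hom X C D),
      (f >> g) >> h = f >> (g >> h);
  comp_idl : forall (A B : Obj X) (f : Hom X A B), idm A >> f = f;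
  comp_idr : forall (A B : Obj X) (f : Hom X A B), f >> idm B = f;
  R1 : forall (A B : Obj X) (f : Hom X A B), rst f >> f = f;
  R2 : forall (A B C : Obj X) (f : Hom X A B) (g : Hom X A C),
      rst f >> rst g = rst g >> rst f;
  R3 : forall (A B C : Obj X) (f : Hom X A B) (g : Hom X A C),
      rst (rst f >> g) = rst f >> rst g;
  R4 : forall (A B C : Obj X) (f : Hom X A B) (g : Hom X B C),
      f >> rst g = rst (f >> g) >> f;
  bang_total : forall A : Obj X, total (bang A);
  to_one : forall (A : Obj X) (f : Hom X A one), f = rst f >> bang A;
  pi0_total : forall A B : Obj X, total (@pi0 X A B);
  pi1_total : forall A B : Obj X, total (@pi1 X A B);
  pair_pi0 : forall (A B C : Obj X) (f : Hom X C A) (g : Hom X C B),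
      ⟨ f , g ⟩ >> pi0 = rst g >> f;
  pair_pi1 : forall (A B C : Obj X) (f : Hom X C A) (g : Hom X C B),
      ⟨ f , g ⟩ >> pi1 = rst f >> g;
  pair_uniq : forall (A B C : Obj X) (f : Hom X C A) (g : Hom X C B)
      (h : Hom X C (prod A B)),
      h >> pi0 = rst g >> f -> h >> pi1 = rst f >> g -> h = ⟨ f , g ⟩;
  add_assoc : forall (A B : Obj X) (f g h : Hom X A B),
      add (add f g) h = add f (add g h);
  add_comm : forall (A B : Obj X) (f g : Hom X A B), add f g = add g f;
  add_0l : forall (A B : Obj X) (f : Hom X A B), add zero f = f;
  rst_add : forall (A B : Obj X) (f g : Hom X A B), rst (add f g) = rst f >> rst g;
  rst_zero : forall A B : Obj X, rst (@zero X A B) = idm A;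
  comp_add : forall (A B C : Obj X) (x : Hom X A B) (f g : Hom X B C),
      x >> add f g = add (x >> f) (x >> g);
  comp_zero : forall (A B C : Obj X) (x : Hom X A B),
      x >> (@zero X B C) = rst x >> zero;
  add_pi0 : forall (A B C : Obj X) (f g : Hom X C (prod A B)),
      add f g >> pi0 = add (f >> pi0) (g >> pi0);
  add_pi1 : forall (A B C : Obj X) (f g : Hom X C (prod A B)),
      add f g >> pi1 = add (f >> pi1) (g >> pi1);
  zero_pi0 : forall (A B C : Obj X), (@zero X C (prod A B)) >> pi0 = zero;
  zero_pi1 : forall (A B C : Obj X), (@zero X C (prod A B)) >> pi1 = zero;
  RD1_add : forall (A B : Obj X) (f g : Hom X A B), RD (add f g) = add (RD f) (RD g);
  RD1_zero : forall A B : Obj X, RD (@zero X A B) = zero;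
  RD2_add : forall (A B C : Obj X) (f : Hom X A B) (a : Hom X C A) (b c : Hom X C B),
      ⟨ a , add b c ⟩ >> RD f = add (⟨ a , b ⟩ >> RD f) (⟨ a , c ⟩ >> RD f);
  RD2_zero : forall (A B C : Obj X) (f : Hom X A B) (a : Hom X C A),
      ⟨ a , zero ⟩ >> RD f = rst (a >> f) >> zero;
  RD3_0 : forall A B : Obj X, RD (@pi0 X A B) = pi1 >> iota0;
  RD3_1 : forall A B : Obj X, RD (@pi1 X A B) = pi1 >> iota1;
  RD4 : forall (A B C : Obj X) (f : Hom X C A) (g : Hom X C B),
      RD ⟨ f , g ⟩ = add (tens (idm C) pi0 >> RD f) (tens (idm C) pi1 >> RD g);
  RD5 : forall (A B C : Obj X) (f : Hom X A B) (g : Hom X B C),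
      RD (f >> g) = ⟨ pi0 , ⟨ pi0 >> f , pi1 ⟩ >> RD g ⟩ >> RD f;
  RD8 : forall (A B : Obj X) (f : Hom X A B), rst (RD f) = tens (rst f) (idm B);
  RD9 : forall (A B : Obj X) (f : Hom X A B), RD (rst f) = tens (rst f) (idm A) >> pi1
}.

End Defs.

Arguments tens {X A B C D} f g.
Arguments iota0 {X A B}.
Arguments iota1 {X A B}.
Arguments le {X A B} f g.
Arguments nowhere {X A B} f.
Arguments disjoint {X A B} f g.
Arguments is_join {X I A B} f j.
Arguments is_join2 {X A B} f g j.


(* Write e_T := rst (rst bT >> m) and e_F := rst (rst bF >> n) for the domains
   of the two branches.  They are disjoint restriction idempotents, so by the
   countable disjoint joins they have a join E, which is again a restriction
   idempotent, and E >> J = J because J is the join of e_T >> J and e_F >> J.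
   The key differential fact is that reverse differentiation commutes with
   restriction idempotents: e >> <1,c> >> R[f] = <1,c> >> R[e >> f] (from
   [RD.5] and [RD.9]).  Hence precomposing the join E with <1,a> and
   postcomposing it with <1, pi0 v> >> R[J] >> pi1 — which preserves joins —
   turns the three maps e_T, e_F, E into the two branches of the right-hand
   side and the left-hand side of the theorem. *)

Section ReverseDifferentialRestriction.

Variable X : RDRCData.
Hypothesis HX : IsBasicRDRC X.

Local Notation compA := (comp_assoc X HX _ _ _ _).
Local Notation comp1l := (comp_idl X HX _ _).
Local Notation comp1r := (comp_idr X HX _ _).

Local Ltac assoc_right := repeat rewrite compA.

Lemma rst_idm (A : Obj X) : rst (idm A) = idm A.
Proof. rewrite <- (comp1r (rst (idm A))). apply (R1 X HX). Qed.

Lemma rst_rst (A B : Obj X) (f : Hom X A B) : rst (rst f) = rst f.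
Proof.
  pose proof (R3 X HX _ _ _ f (idm A)) as H.
  rewrite comp1r, rst_idm, comp1r in H. exact H.
Qed.

Lemma rst_idem (A B : Obj X) (f : Hom X A B) : rst f >> rst f = rst f.
Proof. pose proof (R1 X HX _ _ (rst f)) as H. rewrite rst_rst in H. exact H. Qed.

Lemma rst_comp_le (A B C : Obj X) (f : Hom X A B) (g : Hom X B C) :
  rst f >> rst (f >> g) = rst (f >> g).
Proof. rewrite <- (R3 X HX), <- compA, (R1 X HX). reflexivity. Qed.

Lemma rst_comp_total (A B C : Obj X) (f : Hom X A B) (g : Hom X B C) :
  total X g -> rst (f >> g) = rst f.
Proof.
  intro Hg.
  assert (Hf : f = rst (f >> g) >> f).
  { rewrite <- (R4 X HX), Hg, comp1r. reflexivity. }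
  symmetry. transitivity (rst (rst (f >> g) >> f)); [rewrite <- Hf; reflexivity |].
  rewrite (R3 X HX), (R2 X HX), rst_comp_le. reflexivity.
Qed.

Lemma le_antisym (A B : Obj X) (f g : Hom X A B) : le f g -> le g f -> f = g.
Proof.
  unfold le. intros Hfg Hgf.
  assert (Hdom : rst f = rst g).
  { assert (Hf : rst f = rst f >> rst g) by (rewrite <- (R3 X HX), Hfg; reflexivity).
    assert (Hg : rst g = rst g >> rst f) by (rewrite <- (R3 X HX), Hgf; reflexivity).
    rewrite Hf, (R2 X HX). exact (eq_sym Hg). }
  rewrite <- Hfg, Hdom. apply (R1 X HX).
Qed.

Lemma rst_graph (A B : Obj X) (c : Hom X A B) : rst ⟨ idm A , c ⟩ = rst c.
Proof.
  rewrite <- (rst_comp_total _ _ _ ⟨ idm A , c ⟩ pi1 (pi1_total X HX _ _)).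
  rewrite (pair_pi1 X HX), rst_idm, comp1l. reflexivity.
Qed.

Lemma pair_restrict_fst (A B : Obj X) (e : Hom X A A) :
  rst e = e -> ⟨ @pi0 X A B >> e , pi1 ⟩ = rst (pi0 >> e).
Proof.
  intro He. symmetry. apply (pair_uniq X HX).
  - rewrite <- (R4 X HX), He, (pi1_total X HX), comp1l. reflexivity.
  - reflexivity.
Qed.

Lemma pair_graph_factor (G U T : Obj X) (a : Hom X G U) (v : Hom X G T) :
  ⟨ ⟨ idm G , a ⟩ , v ⟩ = ⟨ idm G , a ⟩ >> ⟨ idm _ , pi0 >> v ⟩.
Proof.
  symmetry. apply (pair_uniq X HX).
  - rewrite compA, (pair_pi0 X HX), comp1r, (R4 X HX).
    rewrite <- compA, (pair_pi0 X HX), comp1r, (R3 X HX).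
    rewrite (R2 X HX), compA, <- (rst_graph _ _ a), (R1 X HX). reflexivity.
  - rewrite compA, (pair_pi1 X HX), rst_idm, comp1l.
    rewrite <- compA, (pair_pi0 X HX), comp1r, rst_graph. reflexivity.
Qed.

Lemma RD_idempotent (A : Obj X) (e : Hom X A A) :
  rst e = e -> RD e = rst (pi0 >> e) >> pi1.
Proof.
  intro He. transitivity (RD (rst e)); [rewrite He; reflexivity |].
  rewrite (RD9 X HX), He. unfold tens. rewrite comp1r, pair_restrict_fst by exact He.
  reflexivity.
Qed.

(* Reverse differentiation commutes with restriction idempotents:
   R[e >> f] = (e x 1) >> R[f], by the chain rule [RD.5]. *)
Lemma RD_restrict (A B : Obj X) (e : Hom X A A) (f : Hom X A B) :
  rst e = e -> RD (e >> f) = rst (pi0 >> e) >> RD f.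
Proof.
  intro He.
  rewrite (RD5 X HX), RD_idempotent, pair_restrict_fst by exact He.
  set (Y := rst (pi0 >> e) >> RD f).
  rewrite <- compA, (R4 X HX), compA, (pair_pi1 X HX), (pi0_total X HX), comp1l.
  rewrite <- compA, (pair_pi0 X HX), compA, (R3 X HX), (R2 X HX), compA, (R1 X HX).
  unfold Y. rewrite <- compA, rst_idem. reflexivity.
Qed.

Lemma rd_graph_restrict (A B : Obj X) (e : Hom X A A) (c f : Hom X A B) :
  rst e = e -> e >> (⟨ idm A , c ⟩ >> RD f) = ⟨ idm A , c ⟩ >> RD (e >> f).
Proof.
  intro He. rewrite RD_restrict by exact He.
  rewrite <- (compA ⟨ idm A , c ⟩ (rst (pi0 >> e)) (RD f)).
  rewrite (R4 X HX), <- (compA ⟨ idm A , c ⟩ pi0 e), (pair_pi0 X HX), comp1r.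
  rewrite (R3 X HX), He, <- compA.
  f_equal.
  replace (rst c >> e) with (e >> rst c) by (rewrite <- He; apply (R2 X HX)).
  rewrite compA, <- rst_graph, (R1 X HX). reflexivity.
Qed.

Lemma rd_graph_rst (C A B D E : Obj X) (p : Hom X C A) (b : Hom X A E)
    (c f : Hom X A B) (k : Hom X A D) :
  p >> ⟨ idm A , c ⟩ >> RD (rst b >> f) >> k
  = rst (p >> b) >> (p >> ⟨ idm A , c ⟩ >> RD f >> k).
Proof.
  rewrite (compA p ⟨ idm A , c ⟩), <- (rd_graph_restrict _ _ (rst b)) by apply rst_rst.
  rewrite <- (compA p (rst b)), (R4 X HX).
  assoc_right. reflexivity.
Qed.

(* Restricting before a reverse derivative along a graph, in the pre- and
   postcomposed form in which it occurs in the theorem. *)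
Lemma restrict_before_rd (C A B D : Obj X) (p : Hom X C A) (e : Hom X A A)
    (c J : Hom X A B) (k : Hom X A D) :
  rst e = e ->
  p >> e >> (⟨ idm A , c ⟩ >> RD J >> k) = p >> ⟨ idm A , c ⟩ >> RD (e >> J) >> k.
Proof.
  intro He.
  rewrite compA, <- (compA e (⟨ idm A , c ⟩ >> RD J) k), rd_graph_restrict by exact He.
  assoc_right. reflexivity.
Qed.

Lemma join2_of_bool (A B : Obj X) (F : bool -> Hom X A B) (j : Hom X A B) :
  is_join F j -> is_join2 (F true) (F false) j.
Proof.
  intros [Hup Hlub]. split; [apply Hup | split; [apply Hup |]].
  intros h Ht Hf. apply Hlub. intros [|]; assumption.
Qed.

Lemma join2_unique (A B : Obj X) (f g j j' : Hom X A B) :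
  is_join2 f g j -> is_join2 f g j' -> j = j'.
Proof.
  intros [Hf [Hg Hlub]] [Hf' [Hg' Hlub']].
  apply le_antisym; [apply Hlub | apply Hlub']; assumption.
Qed.

Lemma binary_disjoint_joins (HJ : has_countable_disjoint_joins X)
    (A B : Obj X) (f g : Hom X A B) :
  disjoint f g -> disjoint g f ->
  exists j, is_join2 f g j /\
    forall (C D : Obj X) (h : Hom X C A) (k : Hom X B D),
      is_join2 (h >> f >> k) (h >> g >> k) (h >> j >> k).
Proof.
  intros Hfg Hgf.
  set (F := fun b : bool => if b then f else g).
  assert (Hdisj : pairwise_disjoint X F).
  { intros [|] [|] Hne; try (exfalso; apply Hne; reflexivity); assumption. }
  assert (Hcode : forall i i' : bool,
             (if i then 0 else 1) = (if i' then 0 else 1) -> i = i').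
  { intros [|] [|] H; solve [reflexivity | discriminate H]. }
  destruct (HJ bool _ Hcode A B F Hdisj) as [[j Hj] Hpres].
  exists j. split.
  - exact (join2_of_bool _ _ F j Hj).
  - intros C D h k. exact (join2_of_bool _ _ (fun i => h >> F i >> k) _ (Hpres C D h k j Hj)).
Qed.

(* A join of two restriction idempotents is a restriction idempotent: it lies
   below the identity. *)
Lemma join_idempotents_rst (A : Obj X) (e1 e2 E : Hom X A A) :
  rst e1 = e1 -> rst e2 = e2 -> is_join2 e1 e2 E -> rst E = E.
Proof.
  intros He1 He2 [_ [_ Hlub]].
  assert (Hle : le E (idm A)).
  { apply Hlub; unfold le; rewrite comp1r; assumption. }
  unfold le in Hle. rewrite comp1r in Hle. exact Hle.
Qed.

Lemma join_domains_cover (A B : Obj X) (f1 f2 J : Hom X A B) (E : Hom X A A) :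
  is_join2 f1 f2 J -> is_join2 (rst f1 >> J) (rst f2 >> J) (E >> J) -> E >> J = J.
Proof.
  intros HJoin HEJ. pose proof HJoin as [H1 [H2 _]].
  unfold le in H1, H2. rewrite H1, H2 in HEJ.
  exact (join2_unique _ _ _ _ _ _ HEJ HJoin).
Qed.

Lemma nowhere_rst_absorbs (A B1 B2 : Obj X) (b1 : Hom X A B1) (b2 : Hom X A B2)
    (k : Hom X A A) :
  nowhere (rst b1 >> rst b2) -> rst b1 >> rst b2 >> k = rst b1 >> rst b2.
Proof.
  intro H. specialize (H k). unfold le in H.
  rewrite (R3 X HX), rst_rst in H. exact H.
Qed.

Lemma guarded_domains_disjoint (A B1 B2 C1 C2 : Obj X) (b1 : Hom X A B1)
    (b2 : Hom X A B2) (f1 : Hom X A C1) (f2 : Hom X A C2) :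
  nowhere (rst b1 >> rst b2) ->
  disjoint (rst (rst b1 >> f1)) (rst (rst b2 >> f2)).
Proof.
  intros Hb g. unfold le.
  repeat first [rewrite (R3 X HX) | rewrite rst_rst].
  assert (Hswap : rst b1 >> rst f1 >> (rst b2 >> rst f2)
                  = rst b1 >> rst b2 >> (rst f1 >> rst f2)).
  { assoc_right. f_equal. rewrite <- !compA. f_equal. apply (R2 X HX). }
  rewrite Hswap, compA, !nowhere_rst_absorbs by exact Hb. reflexivity.
Qed.

End ReverseDifferentialRestriction.

Theorem mainTheorem3 (X : RDRCData) (HX : IsBasicRDRC X)
  (HJ : has_countable_disjoint_joins X)
  (G U T : Obj X) (bT bF : Hom X (prod G U) one)
  (HbTF : nowhere (rst bT >> rst bF))
  (m n : Hom X (prod G U) T) (a : Hom X G U) (v : Hom X G T)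
  (J : Hom X (prod G U) T) (HJoin : is_join2 (rst bT >> m) (rst bF >> n) J) :
  is_join2
    (rst (⟨ idm G , a ⟩ >> bT) >> (⟨ ⟨ idm G , a ⟩ , v ⟩ >> RD m >> pi1))
    (rst (⟨ idm G , a ⟩ >> bF) >> (⟨ ⟨ idm G , a ⟩ , v ⟩ >> RD n >> pi1))
    (⟨ ⟨ idm G , a ⟩ , v ⟩ >> RD J >> pi1).
Proof.
  rewrite (pair_graph_factor X HX).
  set (p := ⟨ idm G , a ⟩). set (kJ := ⟨ idm _ , pi0 >> v ⟩ >> RD J >> pi1).
  set (eT := rst (rst bT >> m)). set (eF := rst (rst bF >> n)).
  assert (HbFT : nowhere (rst bF >> rst bT)) by (rewrite (R2 X HX); exact HbTF).
  destruct (binary_disjoint_joins X HJ _ _ eT eF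
              (guarded_domains_disjoint X HX _ _ _ _ _ bT bF m n HbTF)
              (guarded_domains_disjoint X HX _ _ _ _ _ bF bT n m HbFT))
    as [E [HE Hpres]].
  assert (HEr : rst E = E)
    by exact (join_idempotents_rst X HX _ eT eF E (rst_rst X HX _ _ _) (rst_rst X HX _ _ _) HE).
  (* their join E is total on the domain of J *)
  assert (HEJ : E >> J = J).
  { pose proof (Hpres _ _ (idm _) J) as HJE. rewrite !(comp_idl X HX) in HJE.
    exact (join_domains_cover X HX _ _ _ _ _ E HJoin HJE). }
  destruct HJoin as [HleT [HleF _]].
  assert (HeT : eT >> J = rst bT >> m) by exact HleT.
  assert (HeF : eF >> J = rst bF >> n) by exact HleF.
  (* precompose the join E with <1,a> and postcompose it with kJ *)
  pose proof (Hpres _ _ p kJ) as Hjoin. unfold kJ in Hjoin.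
  rewrite !(restrict_before_rd X HX) in Hjoin by (apply (rst_rst X HX) || exact HEr).
  rewrite HEJ, HeT, HeF, !(rd_graph_rst X HX) in Hjoin.
  exact Hjoin.
Qed.
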